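(* Let $S$ be a $\tau$-mutation system over $\mathcal{A}=\{a_0,\dots,a_{d-1}\}$ with starting word $w$ of length $m$, and let $n\in\mathbb{N}$. Let $\mathbf{M}$ be the $d\times d$ substitution matrix $\mathbf{M}_{i,j}=\mathbb{E}[\mathrm{ct}_{\vartheta(a_j)}(a_i)]$. Then the expected vector of symbol frequencies in $S(n)$ satisfies \[\mathbb{E}\big[\mathbf{fr}^{(1)}_{S(n)}\big]=\frac{\mathbb{E}\big[\mathbf{ct}^{(1)}_{S(n)}\big]}{m+n(\tau-1)}=\frac{1}{m+n(\tau-1)}\prod_{j=0}^{n-1}\frac{1}{m+j(\tau-1)}\Big(\mathbf{M}+(m+j(\tau-1)-1)\mathbf{I}\Big)\cdot\mathbf{ct}^{(1)}_w .\]
   Context: Let $\mathcal{A}=\{a_0,\dots,a_{d-1}\}$ be a finite alphabet and $\mathcal{A}^\star$ the set of finite nonempty words over $\mathcal{A}$. A mutation law $(\vartheta,\mathbb{P})$ assigns to each $a_t$ a finitely supported probability distribution $\mathbb{P}_{a_t}$ on $\mathcal{A}^\star$; $\vartheta(a_t)$ denotes a random word with law $\mathbb{P}_{a_t}$. It is a $\tau$-mutation law ($\tau\in\mathbb{N}$) if each $\mathbb{P}_{a_t}$ is supported on $\mathcal{A}^\tau$, and an average $\tau$-mutation law if $\mathbb{E}|\vartheta(a_t)|=\tau$ for all $t$. A mutation step applied to $w=w_0\cdots w_{m-1}$ chooses $i\in\{0,\dots,m-1\}$ uniformly at random and replaces $w_i$ by an independent random word with law $\mathbb{P}_{w_i}$,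 giving $\vartheta(w)=w_0\cdots w_{i-1}\vartheta(w_i)w_{i+1}\cdots w_{m-1}$. A mutation system with starting word $w$ is $S(0)=w$, $S(n)=\vartheta(S(n-1))$ with fresh independent randomness at each step; it is a ($\text{average}$) $\tau$-mutation system if its law is. For words $u,v$ with $|u|\le|v|$, $\mathrm{ct}_v(u)$ is the number of $i\in\{0,\dots,|v|-1\}$ with $v_iv_{i+1}\cdots v_{i+|u|-1}=u$, indices taken cyclically modulo $|v|$. For $k\in\mathbb{N}$, $\mathbf{ct}^{(k)}_v\in\mathbb{R}^{d^k}$ is the vector $(\mathrm{ct}_v(u))_{u\in\mathcal{A}^k}$ (coordinates in lexicographic order) and $\mathbf{fr}^{(k)}_v=\mathbf{ct}^{(k)}_v/|v|$. The matrices in the product commute, so the order of the product is immaterial. *)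

From HB Require Import structures.
From mathcomp Require Import all_boot all_order all_algebra.
Set Implicit Arguments. Unset Strict Implicit. Unset Printing Implicit Defensive.
Import Order.TTheory GRing.Theory Num.Theory.
Local Open Scope ring_scope.

(* Alphabet A = {a_0,...,a_{d-1}} is 'I_d; words are seq 'I_d. *)

(* A mutation law: for each letter t, a finitely supported distribution on
   words, given as a finite list of (word, probability) pairs. *)
Definition mlaw (R : Type) (d : nat) := 'I_d -> seq (seq 'I_d * R).

Definition is_mutation_law (R : realFieldType) (d : nat) (L : mlaw R d) : Prop :=
  forall t : 'I_d,
    (forall x, x \in L t -> 0 <= x.2 /\ (0 < size x.1)%N) /\
    \sum_(x <- L t) x.2 = 1.

Definition is_tau_mutation_law (R : realFieldType) (d : nat) (tau : nat)
    (L : mlaw R d) : Prop :=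
  is_mutation_law L /\ forall t x, x \in L t -> size x.1 = tau.

Definition Elaw (R : realFieldType) (d : nat) (V : lmodType R) (L : mlaw R d)
    (t : 'I_d) (g : seq 'I_d -> V) : V :=
  \sum_(x <- L t) x.2 *: g x.1.

(* One mutation step, as its transition operator on observables:
   (mstep L f) v = E[ f (theta(v)) ], with i uniform in {0,..,|v|-1}. *)
Definition mstep (R : realFieldType) (d : nat) (V : lmodType R) (L : mlaw R d)
    (f : seq 'I_d -> V) (v : seq 'I_d) : V :=
  \sum_(i < size v)
     (size v)%:R^-1 *: Elaw L (tnth (in_tuple v) i)
        (fun u => f (take i v ++ u ++ drop i.+1 v)).

(* Expectation E[ f (S(n)) ] for the mutation system with starting word w:
   S is the Markov chain with transition operator mstep, so
   E[f(S(n))] = (mstep^n f)(w). *)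
Fixpoint Esys (R : realFieldType) (d : nat) (V : lmodType R) (L : mlaw R d)
    (n : nat) (f : seq 'I_d -> V) (w : seq 'I_d) : V :=
  match n with
  | 0 => f w
  | n'.+1 => Esys L n' (mstep L f) w
  end.

(* Cyclic occurrence count ct_v(u) (for |u| <= |v|). *)
Definition ct (d : nat) (v u : seq 'I_d) : nat :=
  count (fun i => take (size u) (drop i (v ++ v)) == u) (iota 0 (size v)).

Definition ct1 (R : realFieldType) (d : nat) (v : seq 'I_d) : 'cV[R]_d :=
  \col_(i < d) (ct v [:: i])%:R.

Definition fr1 (R : realFieldType) (d : nat) (v : seq 'I_d) : 'cV[R]_d :=
  (size v)%:R^-1 *: ct1 R v.

Definition subst_mx (R : realFieldType) (d : nat) (L : mlaw R d) : 'M[R]_d :=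
  \matrix_(i < d, j < d) Elaw L j (fun u => (ct u [:: i])%:R : R^o).

From HB Require Import structures.
From mathcomp Require Import all_boot all_order all_algebra.
From mathcomp Require Import zify.
Set Implicit Arguments. Unset Strict Implicit. Unset Printing Implicit Defensive.
Import Order.TTheory GRing.Theory Num.Theory.
Local Open Scope ring_scope.

(* A mutation step at position i removes one occurrence of the letter a = v_i
   and adds the letters of theta(a), whose expected counts form column a of M.
   Averaging over the |v| positions gives
   E[ct1 (theta v)] = |v|^-1 (M + (|v| - 1) I) ct1 v, so the expected count
   vector evolves linearly; since all words of S(j) have length
   m + j (tau - 1), these matrices are deterministic and iterating gives the
   product formula. *)

Definition mutation_step_mx (R : fieldType) (d : nat) (M : 'M[R]_d) (s : R) :=
  s^-1 *: (M + (s - 1)%:M).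

Lemma comm_mutation_step_mx (R : fieldType) (d : nat) (B M : 'M[R]_d) (s : R) :
  comm_mx B M -> comm_mx B (mutation_step_mx M s).
Proof.
move=> BM; rewrite /comm_mx /mutation_step_mx -scalemxAl -scalemxAr.
by rewrite (comm_mxD BM (comm_mx_scalar _ _)).
Qed.

Lemma comm_mx_prod (R : fieldType) (d : nat) (I : Type) (s : seq I)
    (F : I -> 'M[R]_d) (B : 'M[R]_d) :
  (forall i, comm_mx B (F i)) -> comm_mx B (\big[mulmx/1%:M]_(i <- s) F i).
Proof. by move=> BF; elim/big_ind: _ => [|A C|i _]; [apply: comm_mx1|apply: comm_mxM|]. Qed.

Lemma mulmx_big_ord_recr (R : fieldType) (d k : nat) (F : nat -> 'M[R]_d) :
  \big[mulmx/1%:M]_(j < k.+1) F j = (\big[mulmx/1%:M]_(j < k) F j) *m F k.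
Proof.
rewrite -!(big_mkord xpredT F) /index_iota !subn0 -addn1 iotaD add0n cats1.
elim: (iota 0 k) => [|j s IH] /=; first by rewrite big_cons !big_nil mulmx1 mul1mx.
by rewrite !big_cons IH mulmxA.
Qed.

Lemma ct_seq1 (d : nat) (v : seq 'I_d) (a : 'I_d) : ct v [:: a] = count_mem a v.
Proof.
case: v => [//|x0 v']; set v := x0 :: v'.
rewrite /ct -(eq_in_count (a1 := fun k => nth x0 v k == a)); last first.
  move=> k; rewrite mem_iota add0n => /andP[_ hk].
  by rewrite drop_cat hk (drop_nth x0 hk) /= take0 eqseq_cons andbT.
by rewrite -(count_map (nth x0 v) (pred1 a)) -/(mkseq _ _) mkseq_nth.
Qed.

Section CountVector.

Variables (R : realFieldType) (d : nat).

Lemma ct1_cat (u v : seq 'I_d) : ct1 R (u ++ v) = ct1 R u + ct1 R v.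
Proof. by apply/matrixP => i j; rewrite !mxE !ct_seq1 count_cat natrD. Qed.

Lemma ct1_nil : ct1 R ([::] : seq 'I_d) = 0.
Proof. by apply/matrixP => i j; rewrite !mxE. Qed.

Lemma ct1_sum1 (v : seq 'I_d) : ct1 R v = \sum_(x <- v) ct1 R [:: x].
Proof.
by elim: v => [|x v IH]; rewrite ?big_nil ?ct1_nil // big_cons -IH -ct1_cat.
Qed.

Lemma ct1_splice (v u : seq 'I_d) (i : nat) (x0 : 'I_d) : (i < size v)%N ->
  ct1 R (take i v ++ u ++ drop i.+1 v) = ct1 R v - ct1 R [:: nth x0 v i] + ct1 R u.
Proof.
move=> lt_iv; rewrite -[in ct1 R v](cat_take_drop i v) (drop_nth x0 lt_iv) -cat1s.
rewrite !ct1_cat; set a := ct1 R (take i v); set b := ct1 R [:: _].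
by rewrite [b + _]addrC [in RHS]addrA addrK [in RHS]addrAC -addrA.
Qed.

End CountVector.

Section Expectation.

Variables (R : realFieldType) (d : nat) (L : mlaw R d).

Lemma Elaw_ct1 (t : 'I_d) : Elaw L t (@ct1 R d) = subst_mx L *m ct1 R [:: t].
Proof.
apply/matrixP => i j; rewrite /Elaw summxE mxE (bigD1 t) //= [X in _ + X]big1 => [|k kt].
  by rewrite !mxE ct_seq1 /= eqxx mulr1 addr0; apply: eq_bigr => x _; rewrite !mxE.
by rewrite !mxE ct_seq1 /= eq_sym (negbTE kt) mulr0.
Qed.

Lemma Elaw_addl (V : lmodType R) (t : 'I_d) (c : V) (g : seq 'I_d -> V) :
  is_mutation_law L -> Elaw L t (fun u => c + g u) = c + Elaw L t g.
Proof.
move=> lawL; rewrite /Elaw -{2}[c]scale1r -(proj2 (lawL t)) scaler_suml -big_split /=.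
by apply: eq_bigr => x _; rewrite scalerDr.
Qed.

Lemma eq_Elaw (V : lmodType R) (t : 'I_d) (g h : seq 'I_d -> V) :
  g =1 h -> Elaw L t g = Elaw L t h.
Proof. by move=> gh; apply: eq_bigr => x _; rewrite gh. Qed.

Lemma mstep_ct1 (v : seq 'I_d) : is_mutation_law L ->
  mstep L (@ct1 R d) v = mutation_step_mx (subst_mx L) (size v)%:R *m ct1 R v.
Proof.
move=> lawL; set s := size v.
have step (i : 'I_s) :
    Elaw L (tnth (in_tuple v) i) (fun u => ct1 R (take i v ++ u ++ drop i.+1 v)) =
    ct1 R v - ct1 R [:: tnth (in_tuple v) i] + subst_mx L *m ct1 R [:: tnth (in_tuple v) i].
  rewrite (eq_Elaw _ (fun u => ct1_splice R u (tnth (in_tuple v) i) (ltn_ord i))).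
  by rewrite Elaw_addl // Elaw_ct1 -(tnth_nth _ (in_tuple v)).
rewrite /mstep; under eq_bigr do rewrite step.
rewrite -scaler_sumr !big_split /= sumrN sumr_const card_ord -mulmx_sumr.
rewrite -(big_tnth _ _ _ xpredT (fun x => ct1 R [:: x])) -ct1_sum1.
rewrite /mutation_step_mx -scalemxAl mulmxDl mul_scalar_mx -scaler_nat.
by rewrite scalerBl scale1r addrC.
Qed.

End Expectation.

Section Iteration.

Variables (R : realFieldType) (d : nat) (L : mlaw R d).

Lemma eq_Esys (V : lmodType R) (n : nat) (f g : seq 'I_d -> V) (w : seq 'I_d) :
  f =1 g -> Esys L n f w = Esys L n g w.
Proof.
elim: n f g => [|n IH] f g fg /=; first exact: fg.
apply: IH => v; apply: eq_bigr => i _; congr (_ *: _).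
by apply: eq_bigr => x _; rewrite fg.
Qed.

Lemma Esys_linear (V W : lmodType R) (n : nat) (phi : {linear V -> W})
    (f : seq 'I_d -> V) (w : seq 'I_d) :
  Esys L n (phi \o f) w = phi (Esys L n f w).
Proof.
elim: n f => [//|n IH] f /=; rewrite -IH; apply: eq_Esys => v /=.
rewrite /mstep [RHS]linear_sum; apply: eq_bigr => i _.
rewrite [RHS]linearZ /Elaw [in RHS]linear_sum; congr (_ *: _).
by apply: eq_bigr => x _; rewrite linearZ.
Qed.

Variable tau : nat.
Hypotheses (sizeL : forall t x, x \in L t -> size x.1 = tau) (tau_gt0 : (0 < tau)%N).

(* Every word reachable in n steps from w has length |w| + n (tau - 1). *)
Lemma eq_Esys_on_size (V : lmodType R) (n : nat) (f g : seq 'I_d -> V)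
    (w : seq 'I_d) :
  (forall v, size v = (size w + n * (tau - 1))%N -> f v = g v) ->
  Esys L n f w = Esys L n g w.
Proof.
elim: n f g => [|n IH] f g fg /=; first by apply: fg; rewrite addn0.
apply: IH => v size_v; apply: eq_bigr => i _; congr (_ *: _).
apply: eq_big_seq => x xL; congr (_ *: _); apply: fg.
have lt_iv := ltn_ord i.
rewrite !size_cat size_takel ?(ltnW lt_iv) // size_drop (sizeL xL) mulSn; lia.
Qed.

Lemma Esys_fr1 (n : nat) (w : seq 'I_d) :
  Esys L n (@fr1 R d) w =
  (size w + n * (tau - 1))%:R^-1 *: Esys L n (@ct1 R d) w.
Proof.
rewrite -[RHS](Esys_linear _ ( *:%R _)).
by apply: eq_Esys_on_size => v size_v; rewrite /fr1 size_v.
Qed.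

Hypothesis lawL : is_mutation_law L.

Lemma Esys_ct1 (n : nat) (w : seq 'I_d) :
  Esys L n (@ct1 R d) w =
  (\big[mulmx/1%:M]_(j < n)
     mutation_step_mx (subst_mx L) (size w + j * (tau - 1))%:R) *m ct1 R w.
Proof.
set A := fun j : nat => mutation_step_mx (subst_mx L) (size w + j * (tau - 1))%:R.
elim: n => [|n IH]; first by rewrite big_ord0 mul1mx.
have ->: Esys L n.+1 (@ct1 R d) w = Esys L n (mulmx (A n) \o @ct1 R d) w.
  by rewrite /=; apply: eq_Esys_on_size => v size_v; rewrite mstep_ct1 // size_v.
have comm_A j : comm_mx (A n) (A j).
  by apply/comm_mutation_step_mx/comm_mx_sym/comm_mutation_step_mx.
rewrite Esys_linear IH /= mulmxA (mulmx_big_ord_recr _ A).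
by rewrite (comm_mx_prod _ (fun j : 'I_n => comm_A j)).
Qed.

End Iteration.

Lemma tau_mutation_law_gt0 (R : realFieldType) (d tau : nat) (L : mlaw R d)
    (t : 'I_d) :
  is_tau_mutation_law tau L -> (0 < tau)%N.
Proof.
move=> [lawL sizeL]; have [supp_t sum_t] := lawL t.
case Lt: (L t) sum_t => [|x s]; first by rewrite big_nil => /eqP; rewrite eq_sym oner_eq0.
have xL : x \in L t by rewrite Lt mem_head.
by rewrite -(sizeL _ _ xL); case: (supp_t x xL).
Qed.

Theorem mainTheorem4 (R : realFieldType) (d tau : nat) (L : mlaw R d)
    (w : seq 'I_d) (n : nat) :
  is_tau_mutation_law tau L ->
  (0 < size w)%N ->
  let m := size w in
  let len j := (m%:R + j%:R * (tau%:R - 1)) : R in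
  Esys L n (@fr1 R d) w = (len n)^-1 *: Esys L n (@ct1 R d) w /\
  (len n)^-1 *: Esys L n (@ct1 R d) w =
    (len n)^-1 *:
      ((\big[mulmx/1%:M]_(j < n)
          ((len j)^-1 *: (subst_mx L + (len j - 1)%:M))) *m ct1 R w).
Proof.
move=> tauL w_gt0 m len.
have tau_gt0 : (0 < tau)%N.
  by case: w w_gt0 {m len} => [//|t _ _]; exact: tau_mutation_law_gt0 t tauL.
have [lawL sizeL] := tauL.
have lenE j : len j = (m + j * (tau - 1))%:R by rewrite natrD natrM natrB.
rewrite (Esys_fr1 sizeL tau_gt0) (Esys_ct1 sizeL tau_gt0 lawL) lenE; split=> //.
by congr (_ *: (_ *m _)); apply: eq_bigr => j _; rewrite lenE.
Qed.
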